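(* Let $f: (\mathbb{R}^{+})^n \to (\mathbb{R}^{+})^n$ be homogeneous and monotone. All super-eigenspaces $S^\lambda(f) = \{x \in (\mathbb{R}^{+})^n : f(x) \le \lambda x\}$, $\lambda \in \mathbb{R}^{+}$, are bounded in the Hilbert projective metric if and only if $f$ is indecomposable.
   Context: Homogeneous: $f(\lambda x) = \lambda f(x)$ for all $\lambda > 0$; monotone: $x \le y$ componentwise implies $f(x) \le f(y)$. For $u>0$ and $J \subseteq \{1,\dots,n\}$, $u_J$ has entries $u$ on $J$ and $1$ off $J$. $f$ is decomposable if there is a partition $\{1,\dots,n\} = I \cup J$ with $I \cap J = \emptyset$, $I, J$ nonempty, such that $\lim_{u\to\infty} f_i(u_J) < \infty$ for all $i \in I$; indecomposable otherwise. Hilbert projective metric: $d_H(y,z) = \max_i \log(y_i/z_i) - \min_i \log(y_i/z_i)$; a set $A$ is bounded if $\sup_{y,z\in A} d_H(y,z)<\infty$. *)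

From mathcomp Require Import ssreflect ssrbool ssrfun eqtype ssrnat fintype finset.
From Stdlib Require Import Reals.
From Coquelicot Require Import Coquelicot.
Open Scope R_scope.

Definition vec (n : nat) := 'I_n -> R.

Definition pos_vec {n} (x : vec n) : Prop := forall i, 0 < x i.

Definition vle {n} (x y : vec n) : Prop := forall i, x i <= y i.

Definition vscale {n} (l : R) (x : vec n) : vec n := fun i => l * x i.

Definition maps_pos {n} (f : vec n -> vec n) : Prop :=
  forall x, pos_vec x -> pos_vec (f x).

Definition homogeneous {n} (f : vec n -> vec n) : Prop :=
  forall (l : R) (x : vec n), 0 < l -> pos_vec x -> f (vscale l x) = vscale l (f x).

Definition monotone {n} (f : vec n -> vec n) : Prop :=
  forall x y : vec n, pos_vec x -> pos_vec y -> vle x y -> vle (f x) (f y).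

Definition uJ {n} (u : R) (J : {set 'I_n}) : vec n :=
  fun i => if i \in J then u else 1.

Definition decomposable {n} (f : vec n -> vec n) : Prop :=
  exists I J : {set 'I_n},
    I :&: J = set0 /\ I :|: J = setT /\ I != set0 /\ J != set0 /\
    forall i, i \in I -> ex_finite_lim (fun u => f (uJ u J) i) p_infty.

Definition indecomposable {n} (f : vec n -> vec n) : Prop := ~ decomposable f.

(* Hilbert projective metric: d_H(y,z) = max_i log(y_i/z_i) - min_i log(y_i/z_i).
   d_H(y,z) <= M  iff  forall i j, log(y_i/z_i) - log(y_j/z_j) <= M. *)
Definition hilbert_le {n} (y z : vec n) (M : R) : Prop :=
  forall i j : 'I_n, ln (y i / z i) - ln (y j / z j) <= M.

Definition hilbert_bounded {n} (A : vec n -> Prop) : Prop :=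
  exists M : R, forall y z, A y -> A z -> hilbert_le y z M.

Definition super_eigenspace {n} (f : vec n -> vec n) (lam : R) : vec n -> Prop :=
  fun x => pos_vec x /\ vle (f x) (vscale lam x).

(* If f is decomposable along I ∪ J, the f_i (i ∈ I) stay bounded along u_J, so
   all u_J (u ≥ 1) are super-eigenvectors for one λ, while d_H(u_J, 1) = log u.
   Conversely, let x ∈ S^λ(f) be normalised by min_i x_i = 1 and let A_c be the
   set of coordinates with x_i ≤ c.  Indecomposability applied to the complement
   J of A_c gives i ∈ A_c with f_i(u_J) > λ c for u large; since f_i(x) ≤ λ c,
   monotonicity forbids u_J ≤ x, so some coordinate of J lies below a threshold
   depending only on c.  Hence A_c grows as c passes through n such thresholds,
   which bounds max_i x_i, and thus d_H, uniformly on S^λ(f). *)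

From mathcomp Require Import ssreflect ssrbool ssrfun eqtype ssrnat seq fintype finset.
From Stdlib Require Import Reals Lra Classical.
From Coquelicot Require Import Coquelicot.
Open Scope R_scope.

Lemma finite_upclosed_bound (T : finType) (P : T -> R -> Prop) :
  (forall t a b, P t a -> a <= b -> P t b) ->
  (forall t, exists a, P t a) -> exists a, forall t, P t a.
Proof.
move=> P_up P_ex.
suff [a Pa] : exists a, forall t, t \in enum T -> P t a.
  by exists a => t; apply: Pa; rewrite mem_enum.
elim: (enum T) => [|t s [a Pa]]; first by exists 0.
have [b Pb] := P_ex t.
exists (Rmax a b) => t'; rewrite in_cons => /orP [/eqP -> | t's].
- exact: P_up Pb (Rmax_r a b).
- exact: P_up (Pa t' t's) (Rmax_l a b).
Qed.

Lemma finite_argmin (T : finType) (g : T -> R) : T -> exists t0, forall t, g t0 <= g t.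
Proof.
move=> d.
suff [a Ha] : exists t0, forall t, t \in enum T -> g t0 <= g t.
  by exists a => t; apply: Ha; rewrite mem_enum.
elim: (enum T) => [|t s [a Ha]]; first by exists d.
case: (Rle_dec (g t) (g a)) => gta.
- exists t => t'; rewrite in_cons => /orP [/eqP -> | t's]; first lra.
  by have := Ha t' t's; lra.
- exists a => t'; rewrite in_cons => /orP [/eqP -> | t's]; [lra | exact: Ha].
Qed.

Section NondecreasingLimit.

Variable g : R -> R.
Hypothesis g_nondecr : forall u v, 0 < u -> u <= v -> g u <= g v.

Lemma ex_finite_lim_pinfty_ub :
  ex_finite_lim g p_infty -> exists C, forall u, 0 < u -> g u <= C.
Proof.
move=> [l /is_lim_spec lim_l].
have [M HM] := lim_l (mkposreal 1 Rlt_0_1).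
exists (l + 1) => u u_gt0.
set v := Rmax u (Rabs M + 1).
have Mv : M < v by apply: Rlt_le_trans (Rmax_r _ _); have := Rle_abs M; lra.
have /= close := HM v Mv.
have := g_nondecr u v u_gt0 (Rmax_l _ _).
have := Rle_abs (g v - l); lra.
Qed.

Lemma ub_ex_finite_lim_pinfty M :
  (forall u, 0 < u -> g u <= M) -> ex_finite_lim g p_infty.
Proof.
move=> g_ub.
pose E r := exists u, 0 < u /\ r = g u.
have E_bound : bound E by exists M => r [u [u_gt0 ->]]; apply: g_ub.
have E_inhab : exists r, E r by exists (g 1), 1; split; [lra|].
have [L [L_ub L_lub]] := completeness E E_bound E_inhab.
exists L; apply/is_lim_spec => eps /=.
have [u0 [u0_gt0 gu0]] : exists u0, 0 < u0 /\ L - eps < g u0.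
  apply: NNPP => no_u0.
  suff : L <= L - eps by have := cond_pos eps; lra.
  apply: L_lub => r [u [u_gt0 ->]]; apply: Rnot_lt_le => lt_r.
  by apply: no_u0; exists u; split; lra.
exists u0 => v u0v.
have gvL : g v <= L by apply: L_ub; exists v; split; [lra|].
have := g_nondecr u0 v u0_gt0 (Rlt_le _ _ u0v).
rewrite /Rabs; case: Rcase_abs => _; lra.
Qed.

Lemma not_ex_finite_lim_pinfty :
  ~ ex_finite_lim g p_infty ->
  forall M, exists U, 1 <= U /\ forall u, U <= u -> M < g u.
Proof.
move=> no_lim M; apply: NNPP => no_U; apply/no_lim/(ub_ex_finite_lim_pinfty M).
move=> u u_gt0; apply: Rnot_lt_le => Mu; apply: no_U.
exists (Rmax 1 u); split; first exact: Rmax_l.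
move=> v Uv; apply: Rlt_le_trans Mu _; apply: g_nondecr => //.
exact: Rle_trans (Rmax_r 1 u) Uv.
Qed.

End NondecreasingLimit.

Lemma uJ_pos n u (J : {set 'I_n}) : 0 < u -> pos_vec (uJ u J).
Proof. by move=> u_gt0 i; rewrite /uJ; case: (i \in J); lra. Qed.

Lemma monotone_uJ {n} {f : vec n -> vec n} : monotone f ->
  forall (J : {set 'I_n}) i u v, 0 < u -> u <= v -> f (uJ u J) i <= f (uJ v J) i.
Proof.
move=> f_mono J i u v u_gt0 uv; apply: f_mono; try (apply: uJ_pos; lra).
by move=> k; rewrite /uJ; case: (k \in J); lra.
Qed.

(* Only the blocks J matter: I is forced to be the complement of J. *)
Lemma decomposableP n (f : vec n -> vec n) :
  decomposable f <->
  exists J : {set 'I_n}, [/\ J != set0, J != setT &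
    forall i, i \notin J -> ex_finite_lim (fun u => f (uJ u J) i) p_infty].
Proof.
split.
- move=> [I [J [IJ0 [IJT [I0 [J0 I_lim]]]]]].
  have notJ_I i : i \notin J -> i \in I.
    by move/setP: IJT => /(_ i); rewrite !inE => + /negbTE Ji; rewrite Ji orbF => ->.
  exists J; split=> //; last by move=> i /notJ_I; exact: I_lim.
  have [i Ii] := set0Pn I I0; apply/negP => /eqP JT.
  by move/setP: IJ0 => /(_ i); rewrite !inE Ii JT inE.
- move=> [J [J0 JT J_lim]].
  exists (~: J), J; split; [|split; [|split; [|split]]] => //.
  + by apply/setP => i; rewrite !inE; case: (i \in J).
  + by apply/setP => i; rewrite !inE; case: (i \in J).
  + by rewrite -setCT (inj_eq (@setC_inj _)).
  + by move=> i; rewrite inE; apply: J_lim.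
Qed.

Lemma indecomposable_blowup n (f : vec n -> vec n) :
  monotone f -> indecomposable f ->
  forall M, exists U, 1 <= U /\ forall J : {set 'I_n}, J != set0 -> J != setT ->
    exists2 i, i \notin J & forall u, U <= u -> M < f (uJ u J) i.
Proof.
move=> f_mono f_indec M.
pose P (J : {set 'I_n}) U := 1 <= U /\ (J != set0 -> J != setT ->
  exists2 i, i \notin J & forall u, U <= u -> M < f (uJ u J) i).
suff [U PU] : exists U, forall J, P J U.
  by exists U; split=> [|J]; [exact: (PU set0).1 | exact: (PU J).2].
apply: finite_upclosed_bound => [J a b [a_ge1 Pa] ab | J].
  split=> [|J0 JT]; first lra.
  have [i Ji blow] := Pa J0 JT; exists i => // u bu; apply: blow; lra.
case: (boolP (J != set0)) => J0; last by exists 1; split=> [|/(negP J0) []]; lra.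
case: (boolP (J != setT)) => JT; last by exists 1; split=> [|_ /(negP JT) []]; lra.
have [i Ji no_lim] : exists2 i, i \notin J &
    ~ ex_finite_lim (fun u => f (uJ u J) i) p_infty.
  apply: NNPP => all_lim; apply/f_indec/decomposableP; exists J; split=> // i Ji.
  by apply: NNPP => no_lim; apply: all_lim; exists i.
have [U [U_ge1 blow]] := not_ex_finite_lim_pinfty _ (monotone_uJ f_mono J i) no_lim M.
by exists U; split=> // _ _; exists i.
Qed.

Definition level_set {n} (c : R) (x : vec n) : {set 'I_n} := [set i | Rle_dec (x i) c].

Lemma in_level_set n c (x : vec n) i : i \in level_set c x <-> x i <= c.
Proof. by rewrite inE; case: Rle_dec. Qed.

Section SuperEigenvectorBound.

Variables (n : nat) (f : vec n -> vec n) (lam : R).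
Hypotheses (f_hom : homogeneous f) (f_mono : monotone f) (lam_gt0 : 0 < lam).

Definition normalised_super_eigenvector (x : vec n) : Prop :=
  [/\ pos_vec x, forall i, 1 <= x i, exists i, x i <= 1 & vle (f x) (vscale lam x)].

Lemma level_set_grows c U x : 1 <= U ->
  (forall J : {set 'I_n}, J != set0 -> J != setT ->
    exists2 i, i \notin J & forall u, U <= u -> lam * c < f (uJ u J) i) ->
  normalised_super_eigenvector x -> level_set c x != set0 ->
  (exists i, Rmax c U < x i) -> level_set c x \proper level_set (Rmax c U) x.
Proof.
move=> U_ge1 blow [x_pos x_ge1 _ x_super] Ac0 [i1 x_i1].
have c_le := Rmax_l c U; have U_le := Rmax_r c U.
set J := ~: level_set c x.
have J0 : J != set0.
  by apply/set0Pn; exists i1; rewrite inE; apply/negP => /in_level_set; lra.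
have JT : J != setT by rewrite -setC0 (inj_eq (@setC_inj _)).
have [i Ji blow_i] := blow J J0 JT.
have x_i : x i <= c by apply/in_level_set; move: Ji; rewrite inE negbK.
(* If J stayed above max c U, then U_J <= x would force f_i(x) > λ c >= λ x_i. *)
have [j Jj x_j] : exists2 j, j \in J & x j <= Rmax c U.
  apply: NNPP => J_high.
  have UJ_le : vle (uJ U J) x.
    move=> k; rewrite /uJ; case: (boolP (k \in J)) => Jk; last exact: x_ge1.
    by apply: Rnot_lt_le => x_k; apply: J_high; exists k => //; lra.
  have := f_mono _ _ (uJ_pos _ U J ltac:(lra)) x_pos UJ_le i.
  have := x_super i; have := blow_i U (Rle_refl U); rewrite /vscale.
  have := Rmult_le_compat_l lam _ _ (Rlt_le _ _ lam_gt0) x_i; lra.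
apply/properP; split.
- by apply/subsetP => k /in_level_set x_k; apply/in_level_set; lra.
- by exists j; [apply/in_level_set | move: Jj; rewrite inE].
Qed.

Lemma normalised_super_eigenvector_bounded :
  indecomposable f -> exists c, forall x, normalised_super_eigenvector x -> forall i, x i <= c.
Proof.
move=> f_indec.
have grow (k : nat) : exists c, forall x, normalised_super_eigenvector x ->
    (k < #|level_set c x|)%nat \/ (forall i, x i <= c).
  elim: k => [|k [c Hc]].
    exists 1 => x [_ _ [i x_i] _]; left.
    by apply/card_gt0P; exists i; apply/in_level_set.
  have [U [U_ge1 blow]] := indecomposable_blowup _ f f_mono f_indec (lam * c).
  exists (Rmax c U) => x x_ns.
  case: (Hc x x_ns) => [big | low]; last first.
    by right => i; apply: Rle_trans (low i) (Rmax_l c U).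
  case: (classic (forall i, x i <= Rmax c U)) => [| /not_all_ex_not [i x_i]]; first by right.
  have Ac0 : level_set c x != set0 by rewrite -card_gt0; apply: leq_ltn_trans big.
  left; apply: leq_ltn_trans big (proper_card _); apply: level_set_grows => //.
  by exists i; lra.
have [c Hc] := grow n.
exists c => x x_ns; case: (Hc x x_ns) => // big.
by have := max_card (level_set c x); rewrite card_ord leqNgt big.
Qed.

(* Rescaling by the minimal coordinate reduces to the normalised case. *)
Lemma super_eigenspace_ratio_bounded :
  indecomposable f -> exists c, forall w, super_eigenspace f lam w ->
    forall t s, w t <= c * w s.
Proof.
move=> f_indec; have [c Hc] := normalised_super_eigenvector_bounded f_indec.
exists c => w [w_pos w_super] t s.
have [m w_min] := finite_argmin _ w t.
have w_m := w_pos m; set a := / w m.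
have a_gt0 : 0 < a by apply: Rinv_0_lt_compat.
have a_wm : a * w m = 1 by rewrite /a; field; lra.
have aw_ns : normalised_super_eigenvector (vscale a w).
  split=> [k | k | | k]; rewrite /vscale.
  - exact: Rmult_lt_0_compat.
  - by rewrite -a_wm; apply: Rmult_le_compat_l; [lra | apply: w_min].
  - by exists m; rewrite a_wm; lra.
  - rewrite (f_hom a w a_gt0 w_pos) /vscale.
    by have := Rmult_le_compat_l a _ _ (Rlt_le _ _ a_gt0) (w_super k); rewrite /vscale; lra.
have aw_t := Hc _ aw_ns t; have aw_m := Hc _ aw_ns m; rewrite /vscale a_wm in aw_t aw_m.
have w_t : w t <= c * w m.
  have := Rmult_le_compat_l (w m) _ _ (Rlt_le _ _ w_m) aw_t.
  by rewrite -Rmult_assoc (Rmult_comm (w m)) a_wm Rmult_1_l Rmult_comm.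
have := Rmult_le_compat_l c _ _ ltac:(lra) (w_min s); lra.
Qed.

End SuperEigenvectorBound.

Lemma hilbert_le_ratio n (y z : vec n) c :
  pos_vec y -> pos_vec z ->
  (forall t s, y t <= c * y s) -> (forall t s, z t <= c * z s) ->
  hilbert_le y z (2 * ln c).
Proof.
move=> y_pos z_pos y_ratio z_ratio i j.
have y_i := y_pos i; have y_j := y_pos j; have z_i := z_pos i; have z_j := z_pos j.
have c_gt0 : 0 < c by have := y_ratio i i; nra.
have := ln_le _ _ y_i (y_ratio i j); have := ln_le _ _ z_j (z_ratio j i).
rewrite !ln_div // !ln_mult //; lra.
Qed.

Lemma decomposable_super_eigenvectors n (f : vec n -> vec n) :
  homogeneous f -> monotone f -> decomposable f ->
  exists a (J : {set 'I_n}), [/\ 0 < a, J != set0, J != setT &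
    forall u, 1 <= u -> super_eigenspace f a (uJ u J)].
Proof.
move=> f_hom f_mono /decomposableP [J [J0 JT J_lim]].
have one_pos : pos_vec (fun _ : 'I_n => 1) by move=> k; lra.
have [a Ha] : exists a, forall t : 'I_n, 1 <= a /\ f (fun _ => 1) t <= a /\
    (t \notin J -> forall u, 0 < u -> f (uJ u J) t <= a).
  apply: finite_upclosed_bound => [t a b [a_ge1 [f1_a Ja]] ab | t].
    by split; [lra | split=> [|tJ u u_gt0]; [lra | have := Ja tJ u u_gt0; lra]].
  have [C HC] : exists C, t \notin J -> forall u, 0 < u -> f (uJ u J) t <= C.
    case: (boolP (t \in J)) => tJ; first by exists 0.
    have [C HC] := ex_finite_lim_pinfty_ub _ (monotone_uJ f_mono J t) (J_lim t tJ).
    by exists C.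
  exists (Rmax 1 (Rmax (f (fun _ => 1) t) C)).
  have := Rmax_l 1 (Rmax (f (fun _ => 1) t) C); have := Rmax_r 1 (Rmax (f (fun _ => 1) t) C).
  have := Rmax_l (f (fun _ => 1) t) C; have := Rmax_r (f (fun _ => 1) t) C.
  by split; [lra | split=> [|tJ u u_gt0]; [lra | have := HC tJ u u_gt0; lra]].
have a_ge1 : 1 <= a by have [i _] := set0Pn J J0; case: (Ha i).
exists a, J; split=> // [|u u_ge1]; first lra.
split=> [|t]; first by apply: uJ_pos; lra.
rewrite /vscale {2}/uJ; case: (boolP (t \in J)) => tJ; last first.
  by case: (Ha t) => _ [_ Ja]; have := Ja tJ u ltac:(lra); lra.
(* On J, u_J <= u 1 and homogeneity give f_t(u_J) <= u f_t(1). *)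
have u1_pos : pos_vec (vscale u (fun _ : 'I_n => 1)).
  by move=> k; rewrite /vscale; lra.
have uJ_le : vle (uJ u J) (vscale u (fun _ => 1)).
  by move=> k; rewrite /uJ /vscale; case: (k \in J); lra.
have := f_mono _ _ (uJ_pos _ u J ltac:(lra)) u1_pos uJ_le t.
rewrite (f_hom u _ ltac:(lra) one_pos) /vscale.
case: (Ha t) => _ [f1_a _].
have := Rmult_le_compat_l u _ _ ltac:(lra) f1_a; lra.
Qed.

Lemma hilbert_le_uJ {n} {J : {set 'I_n}} {i j u M} :
  j \in J -> i \notin J -> 0 < u -> hilbert_le (uJ u J) (uJ 1 J) M -> ln u <= M.
Proof.
move=> jJ iJ u_gt0 /(_ j i).
by rewrite /uJ jJ (negbTE iJ) /Rdiv Rinv_1 !Rmult_1_r ln_1 Rminus_0_r.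
Qed.

Theorem theorem5 (n : nat) (f : vec n -> vec n) :
  maps_pos f -> homogeneous f -> monotone f ->
  ((forall lam : R, 0 < lam -> hilbert_bounded (super_eigenspace f lam))
   <-> indecomposable f).
Proof.
move=> _ f_hom f_mono; split.
- move=> f_bounded /(decomposable_super_eigenvectors _ _ f_hom f_mono)
    [a [J [a_gt0 J0 JT super]]].
  have [j jJ] := set0Pn J J0.
  have [i] : exists i, i \in ~: J by apply/set0Pn; rewrite -setCT (inj_eq (@setC_inj _)).
  rewrite inE => iJ.
  have [M HM] := f_bounded a a_gt0.
  set u := exp (Rabs M + 1).
  have u_ge1 : 1 <= u.
    by rewrite /u; have := exp_ineq1_le (Rabs M + 1); have := Rabs_pos M; lra.
  have := hilbert_le_uJ jJ iJ (exp_pos _)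
    (HM _ _ (super u u_ge1) (super 1 (Rle_refl 1))).
  by rewrite /u ln_exp; have := Rle_abs M; lra.
- move=> f_indec lam lam_gt0.
  have [c Hc] := super_eigenspace_ratio_bounded _ _ _ f_hom f_mono lam_gt0 f_indec.
  exists (2 * ln c) => y z [y_pos y_super] [z_pos z_super].
  by apply: hilbert_le_ratio; rewrite // => t s; apply: Hc.
Qed.
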